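(* Let $l\in\mathbb{N}$ and for each $i\in\{1,\dots,l\}$ let $S_i$ be a countable adequate commutative partial semigroup and let $\langle y_{i,n}\rangle_{n=1}^{\infty}$ be an adequate sequence in $S_i$. Let $C$ be an $IP^{\star}$ set in $T=S_1\times\cdots\times S_l$ and let $m\in\mathbb{N}$. Then for each $i\in\{1,\dots,l\}$ there is a weak product subsystem $\langle x_{i,n}\rangle_{n=1}^{m}$ of $\langle y_{i,n}\rangle_{n=1}^{\infty}$ such that \[ FS(\langle x_{1,n}\rangle_{n=1}^{m})\times\cdots\times FS(\langle x_{l,n}\rangle_{n=1}^{m})\subseteq C . \]
   Context: A partial semigroup $(S,+)$ is a set with a map $+$ from a subset of $S\times S$ to $S$ such that $(a+b)+c=a+(b+c)$ whenever either side is defined (then both are defined and equal); it is commutative if $a+b$ is defined iff $b+a$ is, and then they are equal. For $s\in S$, $\varphi(s)=\{t: s+t\text{ defined}\}$; for finite nonempty $H\subseteq S$, $\sigma(H)=\bigcap_{s\in H}\varphi(s)$; $S$ is adequate if all $\sigma(H)\ne\emptyset$. On $T=S_1\times\cdots\times S_l$, $\bar a+\bar b$ is defined iff $a_i+b_i$ is defined for every $i$, and then equals $(a_1+b_1,\dots,a_l+b_l)$. For a partial semigroup $S$: $\beta S$ is the space of ultrafilters on $S$; $\delta S=\{p\in\beta S:\varphi(x)\in p \text{ for all } x\in S\}$; for $p,q\in\delta S$, $A\in p+q$ iff $\{x\in S: -x+A\in q\}\in p$, where $-x+A=\{y\in\varphi(x): x+y\in A\}$; this makes $\delta S$ a semigroup.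 A set $C\subseteq S$ is $IP^{\star}$ if $C\in p$ for every idempotent $p=p+p$ in $\delta S$. A sequence $\langle y_n\rangle_{n=1}^\infty$ is adequate if all finite sums $\sum_{n\in F}y_n$ are defined and for every finite nonempty $H\subseteq S$ there is $m$ with all sums $\sum_{n\in F}y_n$, $F\subseteq\{m,m+1,\dots\}$ finite nonempty, lying in $\sigma(H)$. $\langle x_n\rangle_{n=1}^{m}$ is a weak product subsystem of $\langle y_n\rangle_{n=1}^{\infty}$ if there are pairwise disjoint finite nonempty $H_1,\dots,H_m\subseteq\mathbb{N}$ with $x_n=\sum_{t\in H_n}y_t$ for each $n$. $FS(\langle x_n\rangle_{n=1}^{m})=\{\sum_{n\in F}x_n: \emptyset\ne F\subseteq\{1,\dots,m\}\}$. *)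

From Stdlib Require List.
From mathcomp Require Import all_boot.
Set Implicit Arguments. Unset Strict Implicit. Unset Printing Implicit Defensive.

(* A partial semigroup: carrier, definedness relation [pdef a b] ("a+b is
   defined") and a total function [padd] whose value matters only when
   [pdef a b] holds. *)
Record psg := PSG { car :> Type; pdef : car -> car -> Prop; padd : car -> car -> car }.

Section PSG.
Variable S : psg.
Local Notation D := (@pdef S).
Local Notation "a +' b" := (@padd S a b) (at level 50, left associativity).

Definition is_partial_semigroup : Prop :=
  forall a b c : S,
    ((D a b /\ D (a +' b) c) \/ (D b c /\ D a (b +' c))) ->
    D a b /\ D (a +' b) c /\ D b c /\ D a (b +' c) /\ (a +' b) +' c = a +' (b +' c).

Definition is_commutative : Prop :=
  forall a b : S, (D a b <-> D b a) /\ (D a b -> a +' b = b +' a).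

Definition phi (s : S) : S -> Prop := fun t => D s t.
Definition sigma (H : seq S) : S -> Prop := fun t => forall s, List.In s H -> phi s t.

Definition adequate : Prop :=
  forall H : seq S, H <> [::] -> exists t, sigma H t.

Definition countable_psg : Prop := exists f : S -> nat, injective f.

Fixpoint lsum (x : S) (l : seq S) : S :=
  match l with [::] => x | y :: l' => x +' lsum y l' end.
Fixpoint lsum_def (x : S) (l : seq S) : Prop :=
  match l with [::] => True | y :: l' => lsum_def y l' /\ D x (lsum y l') end.

(* finite nonempty index sets F subset of nat are represented by strictly
   increasing nonempty lists; sum_{n in F} y_n in increasing order of n *)
Definition idxset (F : seq nat) : Prop := F <> [::] /\ sorted ltn F.
Definition fsum (y : nat -> S) (F : seq nat) : S :=
  match F with [::] => y 0 | f :: F' => lsum (y f) (map y F') end.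
Definition fsum_def (y : nat -> S) (F : seq nat) : Prop :=
  match F with [::] => False | f :: F' => lsum_def (y f) (map y F') end.

Definition adequate_seq (y : nat -> S) : Prop :=
  (forall F, idxset F -> fsum_def y F) /\
  (forall H : seq S, H <> [::] -> exists m : nat,
     forall F, idxset F -> (forall n, n \in F -> m <= n) -> sigma H (fsum y F)).

Definition weak_product_subsystem (y : nat -> S) (m : nat) (x : nat -> S) : Prop :=
  exists H : nat -> seq nat,
    (forall n, n < m -> idxset (H n)) /\
    (forall n n', n < m -> n' < m -> n != n' -> forall t, t \in H n -> t \notin H n') /\
    (forall n, n < m -> fsum_def y (H n) /\ x n = fsum y (H n)).

Definition FS (x : nat -> S) (m : nat) : S -> Prop := fun s =>
  exists F, idxset F /\ (forall n, n \in F -> n < m) /\ fsum_def x F /\ s = fsum x F.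

Definition ultrafilter (p : (S -> Prop) -> Prop) : Prop :=
  p (fun _ => True) /\ ~ p (fun _ => False) /\
  (forall A B : S -> Prop, p A -> (forall x, A x -> B x) -> p B) /\
  (forall A B : S -> Prop, p A -> p B -> p (fun x => A x /\ B x)) /\
  (forall A : S -> Prop, p A \/ p (fun x => ~ A x)).

Definition in_deltaS (p : (S -> Prop) -> Prop) : Prop :=
  ultrafilter p /\ forall x : S, p (phi x).

Definition minus_translate (x : S) (A : S -> Prop) : S -> Prop :=
  fun y => phi x y /\ A (x +' y).

Definition ufadd (p q : (S -> Prop) -> Prop) : (S -> Prop) -> Prop :=
  fun A => p (fun x => q (minus_translate x A)).

Definition idempotent (p : (S -> Prop) -> Prop) : Prop :=
  forall A, ufadd p p A <-> p A.

Definition IPstar (C : S -> Prop) : Prop :=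
  forall p, in_deltaS p -> idempotent p -> p C.

End PSG.

Definition prod_psg (l : nat) (S : 'I_l -> psg) : psg :=
  @PSG (forall i, S i)
       (fun a b => forall i, pdef (a i) (b i))
       (fun a b => fun i => padd (a i) (b i)).

From HB Require Import structures.
From Stdlib Require List.
From mathcomp Require Import all_boot.
From mathcomp Require Import boolp classical_sets filter.
Set Implicit Arguments. Unset Strict Implicit. Unset Printing Implicit Defensive.

(* Cut each [y i] into blocks of length [m], the [j]-th block being
   [y i (j * m + n)] for [n < m].  A pattern [k] picks a subset [k i] of
   [{0, ..., m - 1}] for every [i]; let [z j] be the element of the power
   [T^patterns] whose [k]-coordinate has [i]-th entry the sum over [n] in [k i]
   of the [j]-th block of [y i].  The sequence [z] is adequate, so by the
   Ellis-Numakura lemma some idempotent [u] of [delta (T^patterns)] contains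
   every tail [FS (z j)_(j >= j0)].  Each coordinate projection of [u] is an
   idempotent of [delta T], hence contains [C]; as there are finitely many
   patterns, one sum [sum_(j in G) z j] lies in [C] in every coordinate.  Put
   [x i n := sum_(j in G) y i (j * m + n)]: by commutativity,
   [sum_(n in F i) x i n] is the [i]-th entry of that sum at the pattern [F]. *)

Section PartialSemigroup.
Variable V : psg.
Hypothesis hV : is_partial_semigroup V.
Local Notation D := (@pdef V).
Local Notation "a +' b" := (@padd V a b) (at level 50, left associativity).

Lemma psg_assocl (a b c : V) : D a b -> D (a +' b) c ->
  [/\ D b c, D a (b +' c) & (a +' b) +' c = a +' (b +' c)].
Proof. by move=> ab abc; have [_ [_ [? [? ?]]]] := hV (or_introl (conj ab abc)). Qed.

Lemma psg_assocr (a b c : V) : D b c -> D a (b +' c) ->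
  [/\ D a b, D (a +' b) c & (a +' b) +' c = a +' (b +' c)].
Proof. by move=> bc abc; have [? [? [_ [_ ?]]]] := hV (or_intror (conj bc abc)). Qed.

End PartialSemigroup.

Section Ultrafilter.
Variable V : psg.
Implicit Types (p q : (V -> Prop) -> Prop) (A B : V -> Prop).

Lemma ufT p : ultrafilter p -> p (fun _ => True).
Proof. by case. Qed.

Lemma ufS p A B : ultrafilter p -> (forall x, A x -> B x) -> p A -> p B.
Proof. by case=> _ [_ [hS _]] AB pA; exact: hS pA AB. Qed.

Lemma ufI p A B : ultrafilter p -> p A -> p B -> p (fun x => A x /\ B x).
Proof. by case=> _ [_ [_ [hI _]]]; exact: hI. Qed.

Lemma ufC p A : ultrafilter p -> p A \/ p (fun x => ~ A x).
Proof. by case=> _ [_ [_ [_ hC]]]; exact: hC. Qed.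

Lemma uf_ex p A : ultrafilter p -> p A -> exists x, A x.
Proof.
move=> up pA; apply: contrapT => nA; case: (up) => _ [+ _]; apply.
by apply: ufS up _ pA => x Ax; apply: nA; exists x.
Qed.

Lemma uf_disj p A : ultrafilter p -> p A -> ~ p (fun x => ~ A x).
Proof. by move=> up pA /(ufI up pA) /(uf_ex up) [x []]. Qed.

Lemma uf_eq p q : ultrafilter p -> ultrafilter q -> (forall A, p A -> q A) -> p = q.
Proof.
move=> up uq pq; apply/funext => A; apply/propext; split; first exact: pq.
by move=> qA; case: (ufC A up) => // /pq /(uf_disj uq qA).
Qed.

Lemma uf_forall (K : finType) p (A : K -> V -> Prop) :
  ultrafilter p -> (forall k, p (A k)) -> p (fun x => forall k, A k x).
Proof.
move=> up pA; suff : p (fun x => forall k, k \in enum K -> A k x).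
  by apply: ufS up _ => x Ax k; apply: Ax; rewrite mem_enum.
elim: (enum K) => [|k ks IH]; first by apply: ufS up _ (ufT up).
apply: ufS up _ (ufI up (pA k) IH) => x [Akx Ax] k'.
by rewrite in_cons => /predU1P [->|/Ax].
Qed.

Lemma uf_from_base (I : Type) (D : I -> Prop) (B : I -> V -> Prop) :
  (exists i, D i) ->
  (forall i j, D i -> D j -> exists2 k, D k & forall x, B k x -> B i x /\ B j x) ->
  (forall i, D i -> exists x, B i x) ->
  exists2 p, ultrafilter p & forall i, D i -> p (B i).
Proof.
move=> D0 DI DB.
have FB : Filter (filter_from D B).
  apply: filter_from_filter D0 _ => i j Di Dj.
  by have [k Dk kij] := DI i j Di Dj; exists k.
have [p [up Bp]] := ultraFilterLemma (filter_from_proper FB DB).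
have Pp : ProperFilter p := @ultra_proper _ _ up.
exists p; last by move=> i Di; apply: Bp; exists i.
split; first exact: filterT.
split; first exact: filter_not_empty.
split; first by move=> A1 A2 pA12 A12; exact: filterS A12 pA12.
split; first by move=> A1 A2; exact: filterI.
by move=> A; exact: in_ultra_setVsetC.
Qed.

End Ultrafilter.

Section UltrafilterSum.
Variable V : psg.
Implicit Types (p q r : (V -> Prop) -> Prop) (A : V -> Prop).

Lemma ufadd_uf p q : ultrafilter p -> in_deltaS q -> ultrafilter (ufadd p q).
Proof.
move=> up [uq dq]; split; [|split; [|split; [|split]]].
- by apply: ufS up _ (ufT up) => x _; apply: ufS uq _ (dq x).
- by move/(uf_ex up) => [x /(uf_ex uq) [y []]].
- move=> A B pA AB; apply: ufS up _ pA => x; apply: ufS uq _.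
  by move=> y [xy /AB].
- move=> A B pA pB; apply: ufS up _ (ufI up pA pB) => x [qA qB].
  by apply: ufS uq _ (ufI uq qA qB) => y [[xy ?] [_ ?]].
- move=> A; case: (ufC (fun x => q (minus_translate x A)) up) => [|pnA]; first by left.
  right; apply: ufS up _ pnA => x nqA; case: (ufC (fun y => A (padd x y)) uq) => qA.
    by case: nqA; apply: ufS uq _ (ufI uq (dq x) qA).
  exact: ufS uq _ (ufI uq (dq x) qA).
Qed.

Hypothesis hV : is_partial_semigroup V.

Lemma ufadd_delta p q : in_deltaS p -> in_deltaS q -> in_deltaS (ufadd p q).
Proof.
move=> [up dp] dq; split; first exact: ufadd_uf.
move=> x; apply: ufS up _ (dp x) => a xa; case: dq => uq dq.
apply: ufS uq _ (ufI uq (dq a) (dq (padd x a))) => b [ab xab].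
by have [? ? _] := psg_assocl hV xa xab.
Qed.

Lemma ufadd_assoc p q r : in_deltaS p -> in_deltaS q -> in_deltaS r ->
  ufadd (ufadd p q) r = ufadd p (ufadd q r).
Proof.
move=> [up _] dq dr; apply: uf_eq.
- by apply: ufadd_uf dr; apply: ufadd_uf.
- by apply: ufadd_uf; last exact: ufadd_delta.
move=> A; apply: ufS up _ => a; apply: ufS dq.1 _ => b [ab]; apply: ufS dr.1 _.
move=> c [abc Aabc]; have [bc a_bc E] := psg_assocl hV ab abc.
by do 2!split => //; rewrite -E.
Qed.

End UltrafilterSum.

Section EllisNumakura.
Variable V : psg.
Hypothesis hV : is_partial_semigroup V.
Local Notation UF := ((V -> Prop) -> Prop).
Implicit Types (p q r : UF) (K : UF -> Prop).

(* Closedness in the Stone topology: [K] contains every ultrafilter adherent to it. *)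
Definition uf_closed K : Prop :=
  forall r, ultrafilter r -> (forall A, r A -> exists2 q, K q & q A) -> K r.

Record compact_subsemigroup K : Prop := {
  cs_ex : exists p, K p;
  cs_closed : uf_closed K;
  cs_delta : forall p, K p -> in_deltaS p;
  cs_add : forall p q, K p -> K q -> K (ufadd p q) }.

Lemma cs_uf K p : compact_subsemigroup K -> K p -> ultrafilter p.
Proof. by move=> cK /(cs_delta cK) []. Qed.

Lemma closure_common K r A : (forall q, K q -> ultrafilter q) -> ultrafilter r ->
  (forall B, r B -> exists2 q, K q & q B) -> (forall q, K q -> q A) -> r A.
Proof.
move=> uK ur rK KA; case: (ufC A ur) => // /rK [q Kq].
by move/(uf_disj (uK q Kq) (KA q Kq)).
Qed.

Lemma uf_closed_common K r : uf_closed K -> (forall q, K q -> ultrafilter q) ->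
  ultrafilter r -> (forall A, (forall q, K q -> q A) -> r A) -> K r.
Proof.
move=> cK uK ur Kr; apply: cK => // A rA; apply: contrapT => nKA.
have /(uf_disj ur rA) [] : r (fun x => ~ A x).
  apply: Kr => q Kq; case: (ufC A (uK q Kq)) => // qA.
  by case: nKA; exists q.
Qed.

Lemma chain_meet_compact (Ks : (UF -> Prop) -> Prop) :
  (exists K, Ks K) -> (forall K, Ks K -> compact_subsemigroup K) ->
  (forall K1 K2, Ks K1 -> Ks K2 -> (forall p, K1 p -> K2 p) \/ (forall p, K2 p -> K1 p)) ->
  compact_subsemigroup (fun p => forall K, Ks K -> K p).
Proof.
move=> [K0 KsK0] csK chain.
have uK K : Ks K -> forall q, K q -> ultrafilter q by move=> /csK cK q; exact: cs_uf.
split.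
- pose D A := exists2 K, Ks K & forall q, K q -> q A.
  have [|A1 A2 [K1 Ks1 K1A] [K2 Ks2 K2A]|A [K KsK KA]|p up Dp] :=
    uf_from_base (D := D) (B := id).
  + by exists (fun _ => True), K0 => // q /(uK K0 KsK0) /ufT.
  + exists (fun x => A1 x /\ A2 x) => //.
    case: (chain K1 K2 Ks1 Ks2) => K12; [exists K1|exists K2] => // q Kq.
      by apply: ufI (uK _ Ks1 q Kq) (K1A q Kq) (K2A q (K12 q Kq)).
    by apply: ufI (uK _ Ks2 q Kq) (K1A q (K12 q Kq)) (K2A q Kq).
  + have [q Kq] := cs_ex (csK K KsK); exact: uf_ex (uK K KsK q Kq) (KA q Kq).
  + exists p => K KsK; apply: uf_closed_common (cs_closed (csK K KsK)) (uK K KsK) up _.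
    by move=> A KA; apply: Dp; exists K.
- move=> r ur rK K KsK; apply: (cs_closed (csK K KsK)) ur _ => A /rK [q Kq qA].
  by exists q => //; apply: Kq.
- by move=> p /(_ K0 KsK0); exact: cs_delta (csK K0 KsK0) p.
- by move=> p q Kp Kq K KsK; apply: cs_add (csK K KsK) _ _ (Kp K KsK) (Kq K KsK).
Qed.

Lemma ex_minimal_compact_subsemigroup Q : compact_subsemigroup Q ->
  exists M, [/\ compact_subsemigroup M, forall p, M p -> Q p &
    forall K, compact_subsemigroup K -> (forall p, K p -> M p) -> forall p, M p -> K p].
Proof.
move=> cQ.
pose T := {K | compact_subsemigroup K /\ forall p, K p -> Q p}.
pose R (s t : T) := `[< forall p, sval t p -> sval s p >].
have t0 : T := exist _ Q (conj cQ (fun p Qp => Qp)).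
have [||C Ctot|M Mmax] := @ZL_preorder T t0 R.
- by move=> t; apply/asboolP.
- by move=> r s t /asboolP rs /asboolP st; apply/asboolP => p /st /rs.
- case: (pselect (exists s, C s)) => [[s0 Cs0]|nC]; last first.
    by exists t0 => s Cs; case: nC; exists s.
  pose I p := forall K, (exists2 s, C s & K = sval s) -> K p.
  have cI : compact_subsemigroup I.
    apply: chain_meet_compact; first by exists (sval s0), s0.
      by move=> K [s _ ->]; case: (svalP s).
    move=> _ _ [s Cs ->] [t Ct ->].
    by case: (Ctot s t Cs Ct) => /asboolP; [right|left].
  have IQ p : I p -> Q p.
    by move=> /(_ (sval s0)) Is0; apply: (svalP s0).2; apply: Is0; exists s0.
  exists (exist _ I (conj cI IQ)) => s Cs; apply/asboolP => p Ip; apply: Ip; by exists s.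
- exists (sval M); split; [exact: (svalP M).1 | exact: (svalP M).2 |].
  move=> K cK KM; have KQ p : K p -> Q p by move=> /KM /(svalP M).2.
  by move/asboolP: (Mmax (exist _ K (conj cK KQ)) (asboolT KM)).
Qed.

Lemma uf_closed_addr K p : uf_closed K -> (forall q, K q -> ultrafilter q) ->
  in_deltaS p -> uf_closed (fun r => exists2 q, K q & r = ufadd q p).
Proof.
move=> cK uK [up dp] r ur rK.
have KT q : K q -> q (fun _ => True) by move/uK/ufT.
pose D (AY : (V -> Prop) * (V -> Prop)) := r AY.1 /\ forall q, K q -> q AY.2.
pose B (AY : (V -> Prop) * (V -> Prop)) x := p (minus_translate x AY.1) /\ AY.2 x.
have [|[A1 Y1] [A2 Y2] [rA1 KY1] [rA2 KY2]|[A Y] [rA KY]|q uq Bq] :=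
  uf_from_base (D := D) (B := B).
- by exists (fun _ => True, fun _ => True); split; first exact: ufT.
- exists (fun x => A1 x /\ A2 x, fun x => Y1 x /\ Y2 x).
    split; first exact: ufI ur rA1 rA2.
    by move=> q Kq; exact: ufI (uK q Kq) (KY1 q Kq) (KY2 q Kq).
  rewrite /B /= => x [pA [Y1x Y2x]].
  by split; split => //; apply: ufS up _ pA => y [? []].
- have [_ [q Kq ->] qA] := rK A rA.
  exact: uf_ex (uK q Kq) (ufI (uK q Kq) qA (KY q Kq)).
have Kq : K q.
  apply: (uf_closed_common cK uK uq) => Y KY.
  by apply: ufS uq _ (Bq (fun _ => True, Y) (conj (ufT ur) KY)) => x [].
exists q => //; apply: uf_eq ur (ufadd_uf uq (conj up dp)) _ => A rA.
by apply: ufS uq _ (Bq (A, fun _ => True) (conj rA KT)) => x [].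
Qed.

Theorem compact_subsemigroup_idempotent Q : compact_subsemigroup Q ->
  exists2 p, Q p & ufadd p p = p.
Proof.
move=> /ex_minimal_compact_subsemigroup [M [cM MQ Mmin]].
have [p Mp] := cs_ex cM.
have dM q : M q -> in_deltaS q by exact: cs_delta.
have addM q1 q2 : M q1 -> M q2 -> M (ufadd q1 q2) by exact: cs_add.
have dp := dM p Mp.
pose Mp_ r := exists2 q, M q & r = ufadd q p.
have MpM r : Mp_ r -> M r by case=> q Mq ->; exact: addM.
have cMp : compact_subsemigroup Mp_.
  split.
  - by exists (ufadd p p), p.
  - by apply: uf_closed_addr (cs_closed cM) _ dp => q /dM [].
  - by move=> r /MpM /dM.
  move=> _ _ [q1 Mq1 ->] [q2 Mq2 ->]; exists (ufadd (ufadd q1 p) q2).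
    exact: addM (addM _ _ Mq1 Mp) Mq2.
  by rewrite [RHS]ufadd_assoc //; [exact: ufadd_delta (dM _ Mq1) dp | exact: dM].
have [q Mq qp] := Mmin _ cMp MpM p Mp.
pose L q := M q /\ ufadd q p = p.
have cL : compact_subsemigroup L.
  split.
  - by exists q.
  - move=> r ur rL; have Mr : M r.
      by apply: (cs_closed cM) ur _ => A /rL [q1 [Mq1 _] q1A]; exists q1.
    split => //; apply: uf_eq (ufadd_uf ur dp) dp.1 _ => A.
    by move=> /rL [q1 [_ E1] q1A]; rewrite -E1.
  - by move=> q1 [/dM].
  move=> q1 q2 [Mq1 E1] [Mq2 E2]; split; first exact: addM.
  by rewrite ufadd_assoc ?E2 ?E1 //; exact: dM.
have [_ pp] := Mmin L cL (fun q1 => @proj1 _ _) p Mp.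
by exists p => //; exact: MQ.
Qed.

End EllisNumakura.

Section Extension.
Variable S : psg.

(* Adjoining an identity [One] and an absorbing [Zero], standing for an undefined
   sum, turns [S] into a monoid (commutative if [S] is), so that partial finite
   sums become big operators. *)
Inductive ext := One | Elt of S | Zero.

Definition eadd (a b : ext) : ext :=
  match a, b with
  | One, c | c, One => c
  | Elt x, Elt y => if pselect (pdef x y) then Elt (padd x y) else Zero
  | _, _ => Zero
  end.

Definition esum (f : nat -> S) (F : seq nat) : ext := \big[eadd/One]_(n <- F) Elt (f n).

Lemma eadd_Elt x y : pdef x y -> eadd (Elt x) (Elt y) = Elt (padd x y).
Proof. by move=> xy /=; case: pselect. Qed.

Lemma esum_cons f a F : esum f (a :: F) =
  if pselect (fsum_def f (a :: F)) then Elt (fsum f (a :: F)) else Zero.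
Proof.
elim: F a => [|b F IH] a; rewrite /esum big_cons.
  by rewrite big_nil; case: pselect => // nd; case: (nd I).
rewrite -/(esum f (b :: F)) IH /=.
case: pselect => [dbF|ndbF]; case: pselect => [[_ dabF]|ndabF] //=.
- by case: pselect.
- by case: pselect => // dabF; case: ndabF.
Qed.

Lemma esumP f F v : esum f F = Elt v <-> fsum_def f F /\ fsum f F = v.
Proof.
case: F => [|a F]; first by rewrite /esum big_nil; split=> // -[].
rewrite esum_cons; case: pselect => [dF|ndF]; last by split=> // -[].
by split=> [[<-]|[_ ->]].
Qed.

Lemma esum_fsum f F : fsum_def f F -> esum f F = Elt (fsum f F).
Proof. by move=> dF; apply/esumP. Qed.

Lemma esum_map f (g : nat -> nat) F : esum f (map g F) = esum (fun n => f (g n)) F.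
Proof. by rewrite /esum big_map. Qed.

Lemma eadd1m : left_id One eadd. Proof. by case. Qed.
Lemma eaddm1 : right_id One eadd. Proof. by case. Qed.

Hypothesis hS : is_partial_semigroup S.

Lemma eaddA : associative eadd.
Proof.
case=> [|x|] [|y|] [|z|] //=; try by case: pselect.
case: (pselect (pdef x y)) => xy; case: (pselect (pdef y z)) => yz /=.
- case: (pselect (pdef (padd x y) z)) => xy_z; case: (pselect (pdef x (padd y z))) => x_yz.
  + by have [_ _ ->] := psg_assocl hS xy xy_z.
  + by have [_ ? _] := psg_assocl hS xy xy_z.
  + by have [_ ? _] := psg_assocr hS yz x_yz.
  + by [].
- by case: pselect => // xy_z; have [] := psg_assocl hS xy xy_z.
- by case: pselect => // x_yz; have [] := psg_assocr hS yz x_yz.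
- by [].
Qed.

Definition eadd_law : Monoid.law One :=
  HB.pack_for (Monoid.law One) eadd
    (Monoid.isLaw.Build ext One eadd eaddA eadd1m eaddm1).

Lemma fsum_cat (f : nat -> S) G G' :
  fsum_def f G -> fsum_def f G' -> pdef (fsum f G) (fsum f G') ->
  fsum_def f (G ++ G') /\ fsum f (G ++ G') = padd (fsum f G) (fsum f G').
Proof.
move=> dG dG' dGG'; apply/esumP.
by rewrite /esum (big_cat eadd_law) -!/(esum f _) !esum_fsum //; exact: eadd_Elt.
Qed.

Hypothesis hC : is_commutative S.

Lemma eaddC : commutative eadd.
Proof.
case=> [|x|] [|y|] //=; have [[xy yx] E] := hC x y.
case: (pselect (pdef x y)) => dxy; case: (pselect (pdef y x)) => dyx //.
- by rewrite E.
- by case: dyx; apply: xy.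
- by case: dxy; apply: yx.
Qed.

Definition eadd_comlaw : Monoid.com_law One :=
  HB.pack_for (Monoid.com_law One) eadd
    (Monoid.isComLaw.Build ext One eadd eaddA eaddC eadd1m).

Lemma esum_perm f F F' : perm_eq F F' -> esum f F = esum f F'.
Proof. exact: (perm_big _ (op := eadd_comlaw)). Qed.

Lemma fsum_perm (f : nat -> S) F F' : perm_eq F F' -> fsum_def f F ->
  fsum_def f F' /\ fsum f F' = fsum f F.
Proof. by move=> FF' dF; apply/esumP; rewrite -(esum_perm f FF'); apply/esumP. Qed.

Lemma esum_exchange (f : nat -> nat -> S) (g h : nat -> S) G F :
  (forall j, j \in G -> esum (f j) F = Elt (g j)) ->
  (forall n, n \in F -> esum (fun j => f j n) G = Elt (h n)) ->
  esum g G = esum h F.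
Proof.
move=> Fg Gh; rewrite /esum.
rewrite (eq_big_seq (fun j => esum (f j) F)); last by move=> j /Fg ->.
rewrite /esum (exchange_big eadd_comlaw) /=.
by apply: eq_big_seq => n /Gh <-.
Qed.

End Extension.

Section TailIdempotent.
Variables (V : psg) (z : nat -> V).
Hypothesis hV : is_partial_semigroup V.
Hypothesis hz : forall H : seq V, exists J, forall j, J <= j -> sigma H (z j).

Definition FS_tail (j0 : nat) (v : V) : Prop :=
  exists G, [/\ idxset G, forall j, j \in G -> j0 <= j, fsum_def z G & v = fsum z G].

Lemma FS_tail_add j0 a : FS_tail j0 a ->
  exists j1, forall b, phi a b -> FS_tail j1 b -> FS_tail j0 (padd a b).
Proof.
move=> [G [[G0 sG] Gj0 dG ->]]; exists (\max_(j <- G) j).+1.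
move=> b dGG' [G' [[G'0 sG'] G'j1 dG' Eb]]; subst b.
have GG' a' b' : a' \in G -> b' \in G' -> a' < b'.
  move=> aG bG'; apply: leq_ltn_trans (G'j1 b' bG'); exact: leq_bigmax_seq.
have [dGG'' <-] := fsum_cat hV dG dG' dGG'.
exists (G ++ G'); split => //.
- split; first by case: (G) G0.
  rewrite (sorted_pairwise ltn_trans) pairwise_cat -!(sorted_pairwise ltn_trans).
  by rewrite sG sG' !andbT; apply/allrelP.
- move=> j; rewrite mem_cat => /orP [/Gj0 //|jG'].
  case: (G) G0 Gj0 GG' => // g G1 _ Gj0 GG'.
  by apply: leq_trans (Gj0 g (mem_head _ _)) (ltnW (GG' g j (mem_head _ _) jG')).
Qed.

Lemma FS_tail_compact :
  compact_subsemigroup (fun p => in_deltaS p /\ forall j0, p (FS_tail j0)).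
Proof.
split.
- pose B (Hj : seq V * nat) v := sigma Hj.1 v /\ FS_tail Hj.2 v.
  have [|[H1 j1] [H2 j2] _ _|[H j0] _|p up Bp] := uf_from_base (D := fun _ => True) (B := B).
  + by exists ([::], 0).
  + exists (H1 ++ H2, maxn j1 j2) => // v [/= Hv [G [IG Gj dG Ev]]].
    have Fv j : j <= maxn j1 j2 -> FS_tail j v.
      by move=> jj; exists G; split => // j' /Gj; exact: leq_trans.
    rewrite /B /=; split; split; try by apply: Fv; rewrite ?leq_maxl ?leq_maxr.
      by move=> s sH; apply: Hv; apply/List.in_app_iff; left.
    by move=> s sH; apply: Hv; apply/List.in_app_iff; right.
  + have [J HJ] := hz H; exists (z (maxn J j0)); rewrite /B /=.
    split; first by apply: HJ; rewrite leq_maxl.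
    exists [:: maxn J j0]; split => //.
    by move=> j; rewrite inE => /eqP ->; rewrite leq_maxr.
  + exists p; split; [split=> // x|move=> j0].
      by apply: ufS up _ (Bp ([:: x], 0) I) => v [/(_ x (or_introl erefl))].
    by apply: ufS up _ (Bp ([::], j0) I) => v [].
- move=> r ur rK; have uK q : (in_deltaS q /\ forall j0, q (FS_tail j0)) -> ultrafilter q.
    by case=> [[]].
  split; [split => // x | move=> j0]; apply: (closure_common uK ur rK).
  + by move=> q [[_ dq] _].
  + by move=> q [_ Fq].
- by move=> p [].
- move=> p q [dp Fp] [dq Fq]; split; first exact: ufadd_delta.
  move=> j0; apply: ufS dp.1 _ (Fp j0) => a /FS_tail_add [j1 Fab].
  by apply: ufS dq.1 _ (ufI dq.1 (dq.2 a) (Fq j1)) => b [ab Fb]; split => //; apply: Fab.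
Qed.

Lemma ex_idempotent_FS_tail :
  exists u, [/\ in_deltaS u, ufadd u u = u & forall j0, u (FS_tail j0)].
Proof.
by have [u [du Fu] uu] := compact_subsemigroup_idempotent hV FS_tail_compact; exists u.
Qed.

End TailIdempotent.

Section Product.
Variables (I : Type) (W : I -> psg).

Definition gprod : psg :=
  @PSG (forall i, W i) (fun a b => forall i, pdef (a i) (b i))
       (fun a b i => padd (a i) (b i)).

Lemma gprod_psg : (forall i, is_partial_semigroup (W i)) -> is_partial_semigroup gprod.
Proof.
move=> hW a b c abc.
have {}abc i : (pdef (a i) (b i) /\ pdef (padd (a i) (b i)) (c i)) \/
               (pdef (b i) (c i) /\ pdef (a i) (padd (b i) (c i))).
  by case: abc => -[ab bc]; [left|right].
have hi i := hW i _ _ _ (abc i).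
split; first by move=> i; case: (hi i).
split; first by move=> i; case: (hi i) => _ [].
split; first by move=> i; case: (hi i) => _ [_ []].
split; first by move=> i; case: (hi i) => _ [_ [_ []]].
by apply: functional_extensionality_dep => i; case: (hi i) => _ [_ [_ []]].
Qed.

Lemma fsum_gprod (z : nat -> gprod) G i :
  (fsum_def z G -> fsum_def (fun j => z j i) G) /\ fsum z G i = fsum (fun j => z j i) G.
Proof.
case: G => [|g G] //=; elim: G g => [|h G IH] g //=.
have [IHdef IHE] := IH h; split; last by rewrite IHE.
by move=> [/IHdef dG gG]; split => //; rewrite -IHE.
Qed.

End Product.

Section Projection.
Variables (K : Type) (T : psg).
Local Notation U := (gprod (fun _ : K => T)).
Implicit Types (u : (U -> Prop) -> Prop).

Definition uf_proj (k : K) u : (T -> Prop) -> Prop := fun A => u (fun v => A (v k)).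

Lemma uf_proj_delta k u : in_deltaS u -> in_deltaS (uf_proj k u).
Proof.
move=> [uu du]; split; last by move=> x; apply: ufS uu _ (du (fun _ => x)) => v; apply.
split; first exact: ufT uu.
split; first by case: uu => _ [].
split; first by move=> A B uA AB; apply: ufS uu _ uA => v /AB.
split; first by move=> A B; exact: ufI uu.
by move=> A; exact: ufC uu.
Qed.

Lemma uf_proj_idempotent k u : in_deltaS u -> ufadd u u = u -> idempotent (uf_proj k u).
Proof.
move=> [uu du] uuu A; rewrite /uf_proj.
have -> : u (fun v => A (v k)) = ufadd u u (fun v => A (v k)) by rewrite uuu.
split => uA.
- apply: (ufS uu _ uA) => v uvA; apply: (ufS uu _ (ufI uu (du v) uvA)).
  by move=> w [vw [_ ?]].
- by apply: (ufS uu _ uA) => v; apply: (ufS uu) => w [vw ?]; split; first exact: vw.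
Qed.

Lemma IPstar_proj k u (C : T -> Prop) :
  in_deltaS u -> ufadd u u = u -> IPstar C -> u (fun v => C (v k)).
Proof.
move=> du uuu hC; apply: (hC (uf_proj k u)).
  exact: uf_proj_delta.
exact: uf_proj_idempotent.
Qed.

End Projection.

Lemma IPstar_FS_power (K : finType) (T : psg) (z : nat -> gprod (fun _ : K => T))
    (C : T -> Prop) :
  is_partial_semigroup T -> (forall H, exists J, forall j, J <= j -> sigma H (z j)) ->
  IPstar C -> exists G, [/\ idxset G, fsum_def z G & forall k, C (fsum z G k)].
Proof.
move=> hT hz hC.
have [u [du uuu Fu]] := ex_idempotent_FS_tail (gprod_psg (fun=> hT)) hz.
have uC := uf_forall du.1 (fun k => IPstar_proj k du uuu hC).
have [_ [[G [IG _ dG ->]] CG]] := uf_ex du.1 (ufI du.1 (Fu 0) uC).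
by exists G.
Qed.

Section AdequateSequence.
Variable S : psg.
Hypotheses (hS : is_partial_semigroup S) (hC : is_commutative S).
Variable y : nat -> S.
Hypothesis hy : adequate_seq y.

Lemma idxset_sort (F : seq nat) : uniq F -> F != [::] -> idxset (sort leq F).
Proof.
move=> uF F0; split.
  by move/eqP; rewrite -size_eq0 size_sort size_eq0 (negbTE F0).
by rewrite ltn_sorted_uniq_leq sort_uniq uF sort_sorted //; exact: leq_total.
Qed.

Lemma adequate_fsum_def F : uniq F -> F != [::] -> fsum_def y F.
Proof.
move=> uF F0; have sortF : perm_eq (sort leq F) F by rewrite perm_sort.
exact: (fsum_perm hS hC sortF (hy.1 _ (idxset_sort uF F0))).1.
Qed.

Lemma adequate_tail (H : seq S) : exists M, forall F, uniq F -> F != [::] ->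
  (forall n, n \in F -> M <= n) -> sigma H (fsum y F).
Proof.
case: H => [|s H]; first by exists 0 => F _ _ _ s [].
have [M HM] := hy.2 (s :: H) (fun E => ltac:(discriminate E)).
exists M => F uF F0 FM; have sortF : perm_eq (sort leq F) F by rewrite perm_sort.
have [_ ->] := fsum_perm hS hC sortF (hy.1 _ (idxset_sort uF F0)).
by apply: HM => [|n]; [exact: idxset_sort | rewrite mem_sort; exact: FM].
Qed.

End AdequateSequence.

Lemma bound_forall_fin (X : finType) (P : X -> nat -> Prop) :
  (forall a, exists J, forall j, J <= j -> P a j) ->
  exists J, forall j, J <= j -> forall a, P a j.
Proof.
move=> /choice [J HJ]; exists (\max_a J a) => j jJ a; apply: HJ.
by apply: leq_trans jJ; exact: leq_bigmax.
Qed.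

Section Blocks.
Variables (l : nat) (S : 'I_l -> psg).
Hypothesis hpsg : forall i, is_partial_semigroup (S i).
Hypothesis hcomm : forall i, is_commutative (S i).
Variable y : forall i, nat -> S i.
Hypothesis hy : forall i, adequate_seq (y i).
Variable m : nat.
Hypothesis hm : 0 < m.

Definition pattern := {ffun 'I_l -> {set 'I_m}}.

(* An empty pattern is read as [[:: 0]], so that every entry of [block_seq j]
   is a nonempty sum of terms of the [j]-th block. *)
Definition pattern_idx (k : pattern) (i : 'I_l) : seq nat :=
  let s := [seq val n | n <- enum (k i)] in if s is [::] then [:: 0] else s.

Lemma pattern_idx_uniq k i : uniq (pattern_idx k i).
Proof.
rewrite /pattern_idx; case E: [seq val n | n <- enum (k i)] => [//|a s].
by rewrite -E map_inj_uniq ?enum_uniq //; exact: val_inj.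
Qed.

Lemma pattern_idx_nil k i : pattern_idx k i != [::].
Proof. by rewrite /pattern_idx; case: [seq val n | n <- enum (k i)]. Qed.

Lemma pattern_idx_perm (k : pattern) i F : k i = [set n : 'I_m | val n \in F] ->
  (forall n, n \in F -> n < m) -> uniq F -> F <> [::] -> perm_eq (pattern_idx k i) F.
Proof.
move=> kF Fm uF F0.
have memF : [seq val n | n <- enum (k i)] =i F.
  move=> n; apply/mapP/idP => [[n' + ->]|nF]; first by rewrite mem_enum kF inE.
  by exists (Ordinal (Fm n nF)); rewrite // mem_enum kF inE.
apply: uniq_perm (pattern_idx_uniq k i) uF _; rewrite /pattern_idx.
case E: [seq val n | n <- enum (k i)] => [|a s]; last by rewrite -E.
have [n nF] : exists n, n \in F by case: (F) F0 => // n ? _; exists n; exact: mem_head.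
by move: (memF n); rewrite E nF.
Qed.

Definition block_seq (j : nat) : gprod (fun _ : pattern => prod_psg S) :=
  fun k i => fsum (y i) [seq j * m + n | n <- pattern_idx k i].

Lemma block_idx_inj n : injective (fun j => j * m + n).
Proof. by move=> a b /addIn /eqP; rewrite eqn_pmul2r // => /eqP. Qed.

Lemma block_idx_mod j n : n < m -> (j * m + n) %% m = n.
Proof. by move=> nm; rewrite modnMDl modn_small. Qed.

Lemma block_seq_adequate (H : seq (gprod (fun _ : pattern => prod_psg S))) :
  exists J, forall j, J <= j -> sigma H (block_seq j).
Proof.
have [J HJ] : exists J, forall j, J <= j -> forall ki : pattern * 'I_l,
    sigma [seq x ki.1 ki.2 | x <- H] (block_seq j ki.1 ki.2).
  apply: bound_forall_fin => -[k i].
  have [M HM] := adequate_tail (@hpsg i) (@hcomm i) (hy i) [seq x k i | x <- H].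
  exists M => j jM; apply: HM.
  - by rewrite map_inj_uniq ?pattern_idx_uniq //; exact: addnI.
  - by case: pattern_idx (pattern_idx_nil k i).
  - move=> _ /mapP [n _ ->]; apply: leq_trans jM (leq_trans _ (leq_addr _ _)).
    exact: leq_pmulr.
by exists J => j jJ x xH k i; apply: (HJ j jJ (k, i)); exact: List.in_map.
Qed.

Variable G : seq nat.
Hypothesis IG : idxset G.
Hypothesis dG : fsum_def block_seq G.

Definition block_sum (i : 'I_l) (n : nat) : S i := fsum (y i) [seq j * m + n | j <- G].

Lemma esum_block_sum i n : esum (y i) [seq j * m + n | j <- G] = Elt (block_sum i n).
Proof.
apply/esum_fsum/adequate_fsum_def => //.
- by rewrite map_inj_uniq ?(sorted_uniq ltn_trans ltnn IG.2) //; exact: block_idx_inj.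
- by case: IG => G0 _; case: (G) G0.
Qed.

Lemma block_sum_wps i : weak_product_subsystem (y i) m (block_sum i).
Proof.
exists (fun n => [seq j * m + n | j <- G]); split; [|split].
- move=> n _; case: IG => G0 sG; split; first by case: (G) G0.
  by rewrite sorted_map; apply: sub_sorted sG => a b /=; rewrite ltn_add2r ltn_pmul2r.
- move=> n n' nm n'm nn' _ /mapP [j _ ->]; apply/negP => /mapP [j' _].
  by move/(congr1 (modn^~ m)); rewrite !block_idx_mod // => E; rewrite E eqxx in nn'.
- by move=> n _; case/esumP: (esum_block_sum i n) => ? ->.
Qed.

Lemma block_sumE (k : pattern) i F : k i = [set n : 'I_m | val n \in F] -> idxset F ->
  (forall n, n \in F -> n < m) ->
  fsum_def (block_sum i) F /\ fsum (block_sum i) F = fsum block_seq G k i.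
Proof.
move=> kF [F0 sF] Fm; apply/esumP.
have uF := sorted_uniq ltn_trans ltnn sF.
rewrite -(esum_perm (@hpsg i) (@hcomm i) _ (pattern_idx_perm kF Fm uF F0)).
have [dGk ->] := fsum_gprod block_seq G k.
have [dGki ->] := fsum_gprod (fun j => block_seq j k) G i.
rewrite -(esum_fsum (dGki (dGk dG))); symmetry.
apply: (esum_exchange (@hpsg i) (@hcomm i) (f := fun j n => y i (j * m + n))) => [j _|n _].
- rewrite -esum_map; apply/esum_fsum/adequate_fsum_def => //.
  + by rewrite map_inj_uniq ?pattern_idx_uniq //; exact: addnI.
  + by case: pattern_idx (pattern_idx_nil k i).
- by rewrite -esum_map; exact: esum_block_sum.
Qed.

End Blocks.

Theorem theorem11 (l : nat) (S : 'I_l -> psg)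
  (hl : 0 < l)
  (hpsg : forall i, is_partial_semigroup (S i))
  (hcomm : forall i, is_commutative (S i))
  (hcount : forall i, countable_psg (S i))
  (hadeq : forall i, adequate (S i))
  (y : forall i, nat -> S i)
  (hy : forall i, adequate_seq (y i))
  (C : prod_psg S -> Prop)
  (hC : IPstar C)
  (m : nat) (hm : 0 < m) :
  exists x : forall i, nat -> S i,
    (forall i, weak_product_subsystem (y i) m (x i)) /\
    (forall i F, idxset F -> (forall n, n \in F -> n < m) -> fsum_def (x i) F) /\
    (forall (t : prod_psg S), (forall i, FS (x i) m (t i)) -> C t).
Proof.
have hT : is_partial_semigroup (prod_psg S) := gprod_psg hpsg.
have [G [IG dG CG]] := IPstar_FS_power hT (block_seq_adequate hpsg hcomm hy hm) hC.
have sumE := block_sumE hpsg hcomm hy hm IG dG.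
exists (block_sum y m G); split; [|split].
- by move=> i; exact: block_sum_wps.
- move=> i F IF Fm; pose k : pattern l m := [ffun=> [set n : 'I_m | val n \in F]].
  by have [] := sumE k i F (ffunE _ _) IF Fm.
move=> t /choice [F HF]; pose k : pattern l m := [ffun i => [set n : 'I_m | val n \in F i]].
suff -> : t = fsum (block_seq y (m := m)) G k by exact: CG.
apply: functional_extensionality_dep => i; have [IF [Fm [_ ->]]] := HF i.
by have [_ ->] := sumE k i (F i) (ffunE _ _) IF Fm.
Qed.
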